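(* $\mathcal T_\rightarrow=Gh_\rightarrow$ and $\mathcal T_\leftarrow=Gh_\leftarrow$, where $h_\rightarrow=\{(0,i\sinh v,\cosh v):v>0\}$ and $h_\leftarrow=\{(0,i\sinh v,\cosh v):v<0\}$.
   Context: $[z\cdot z']=z_0z'_0-z_1z'_1-z_2z'_2$ on $\mathbb C^3$, $z^2=[z\cdot z]$; $X^{(c)}=\{z\in\mathbb C^3:z^2=-1\}$, $z=x+iy$; $V^+=\{y\in\mathbb R^3:y^2>0,y_0>0\}$; fix $e\in V^+$; $\mathcal T_\rightarrow=\{z=x+iy\in X^{(c)}:y^2<0,{\rm sgn}\det(e,x,y)=-1\}$, $\mathcal T_\leftarrow=\{z=x+iy\in X^{(c)}:y^2<0,{\rm sgn}\det(e,x,y)=+1\}$ (independent of the choice of $e$). $G=SO_0(1,2)$ acting on $X^{(c)}$ by $gz=gx+igy$. *)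

From HB Require Import structures.
From mathcomp Require Import all_boot all_order all_algebra complex.
From mathcomp Require Import reals sequences exp.
Set Implicit Arguments. Unset Strict Implicit. Unset Printing Implicit Defensive.
Import Order.TTheory GRing.Theory Num.Theory.
Local Open Scope ring_scope.
Local Open Scope complex_scope.

Definition mdot (K : comRingType) (z w : 'cV[K]_3) : K :=
  z ord0 0 * w ord0 0 - z (inord 1) 0 * w (inord 1) 0 - z (inord 2) 0 * w (inord 2) 0.

Definition Xc (R : realType) (z : 'cV[R[i]]_3) : Prop := mdot z z = -1.

Definition reV (R : realType) (z : 'cV[R[i]]_3) : 'cV[R]_3 := map_mx (@complex.Re R) z.
Definition imV (R : realType) (z : 'cV[R[i]]_3) : 'cV[R]_3 := map_mx (@complex.Im R) z.

Definition Vplus (R : realType) (y : 'cV[R]_3) : Prop := 0 < mdot y y /\ 0 < y ord0 0.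

Definition det3 (R : realType) (e x y : 'cV[R]_3) : R :=
  \det (\matrix_(i < 3, j < 3)
          (if (j : nat) == 0%N then e i 0 else if (j : nat) == 1%N then x i 0 else y i 0)).

Definition Tright (R : realType) (e : 'cV[R]_3) (z : 'cV[R[i]]_3) : Prop :=
  Xc z /\ mdot (imV z) (imV z) < 0 /\ Num.sg (det3 e (reV z) (imV z)) = -1.

Definition Tleft (R : realType) (e : 'cV[R]_3) (z : 'cV[R[i]]_3) : Prop :=
  Xc z /\ mdot (imV z) (imV z) < 0 /\ Num.sg (det3 e (reV z) (imV z)) = 1.

Definition Jmx (R : realType) : 'M[R]_3 :=
  \matrix_(i < 3, j < 3) (if i == j then (if (i : nat) == 0%N then 1 else -1) else 0).

(* G = SO_0(1,2): real 3x3 matrices preserving the form, of determinant 1,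
   preserving the time orientation (g_00 > 0, i.e. the identity component). *)
Definition SO012 (R : realType) (g : 'M[R]_3) : Prop :=
  g^T *m Jmx R *m g = Jmx R /\ \det g = 1 /\ 0 < g ord0 ord0.

Definition actG (R : realType) (g : 'M[R]_3) (z : 'cV[R[i]]_3) : 'cV[R[i]]_3 :=
  map_mx (fun r : R => r%:C) (g *m reV z) + 'i *: map_mx (fun r : R => r%:C) (g *m imV z).

Definition sinhR (R : realType) (v : R) : R := (expR v - expR (- v)) / 2.
Definition coshR (R : realType) (v : R) : R := (expR v + expR (- v)) / 2.

Definition hpt (R : realType) (v : R) : 'cV[R[i]]_3 :=
  \col_(k < 3) (if (k : nat) == 0%N then 0
                else if (k : nat) == 1%N then 'i * (sinhR v)%:C
                else (coshR v)%:C).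

(** Write [z = x + i y].  An element [g] of [G] preserves [mdot], and
    [det3 e (g x) (g y) = det3 (g^-1 e) x y]; since [g^-1 e] is again future timelike, the reverse
    Cauchy-Schwarz inequality shows that on [G (hpt v)] the sign of [det3 e x y] is [- sg v].
    Conversely, for [z] in [T], put [S = -+ sqrt (- y^2)] with the sign opposite to that of
    [det3 e x y], [C = sqrt (1 + S^2)] and [w] the Lorentzian cross product of [x] and [y]; the matrix
    with columns [- w / (C S)], [y / S], [x / C] lies in [G] and maps [hpt v] to [z], where
    [sinh v = S].  It has determinant [1], and the sign of [S] is exactly what makes its first
    column future pointing. *)

From HB Require Import structures.
From mathcomp Require Import all_boot all_order all_algebra complex.
From mathcomp Require Import reals sequences exp.
From mathcomp Require Import ring lra.
Import Order.TTheory GRing.Theory Num.Theory.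
Set Implicit Arguments. Unset Strict Implicit. Unset Printing Implicit Defensive.
Local Open Scope ring_scope.

Local Notation i1 := (inord 1 : 'I_3).
Local Notation i2 := (inord 2 : 'I_3).

Lemma ord3P (i : 'I_3) : [\/ i = ord0, i = i1 | i = i2].
Proof.
case: i => [[|[|[|n]]] lt_n3] //; [constructor 1 | constructor 2 | constructor 3];
  by apply: val_inj; rewrite /= ?inordK.
Qed.

Lemma sum_ord3 (V : nmodType) (f : 'I_3 -> V) : \sum_i f i = f ord0 + f i1 + f i2.
Proof.
rewrite !big_ord_recl big_ord0 addr0 addrA.
by congr (_ + f _ + f _); apply: val_inj; rewrite /= inordK.
Qed.

Lemma det_mx33 (K : comPzRingType) (A : 'M[K]_3) : \det A =
  A ord0 ord0 * (A i1 i1 * A i2 i2 - A i1 i2 * A i2 i1)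
  - A ord0 i1 * (A i1 ord0 * A i2 i2 - A i1 i2 * A i2 ord0)
  + A ord0 i2 * (A i1 ord0 * A i2 i1 - A i1 i1 * A i2 ord0).
Proof.
rewrite (expand_det_row _ ord0) sum_ord3 /cofactor.
rewrite !(expand_det_row _ ord0) !big_ord_recl !big_ord0 /cofactor !det_mx11 !mxE /=.
pose B (m n : nat) := A (inord m) (inord n).
have AB i j : A i j = B i j by rewrite /B !inord_val.
rewrite !AB !inordK //= /bump /= !inordK //= !expr0 !expr1 !exprS !expr0; ring.
Qed.

Section Minkowski.
Variable K : comNzRingType.
Implicit Types (x y a b : 'cV[K]_3) (k : K).

Lemma mdotC x y : mdot x y = mdot y x.
Proof. by rewrite /mdot; ring. Qed.

Lemma mdotZl k a b : mdot (k *: a) b = k * mdot a b.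
Proof. by rewrite /mdot !mxE; ring. Qed.

Lemma mdotZr k a b : mdot a (k *: b) = k * mdot a b.
Proof. by rewrite mdotC mdotZl mdotC. Qed.

(** [Jmx] times the Euclidean cross product. *)
Definition lcross x y : 'cV[K]_3 :=
  \col_(k < 3) (if (k : nat) == 0%N then x i1 0 * y i2 0 - x i2 0 * y i1 0
               else if (k : nat) == 1%N then x ord0 0 * y i2 0 - x i2 0 * y ord0 0
               else x i1 0 * y ord0 0 - x ord0 0 * y i1 0).

Lemma lcrossE x y :
  [/\ lcross x y ord0 0 = x i1 0 * y i2 0 - x i2 0 * y i1 0,
      lcross x y i1 0 = x ord0 0 * y i2 0 - x i2 0 * y ord0 0 &
      lcross x y i2 0 = x i1 0 * y ord0 0 - x ord0 0 * y i1 0].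
Proof. by rewrite !mxE !inordK. Qed.

Lemma mdot_lcrossl x y : mdot (lcross x y) x = 0.
Proof. by rewrite /mdot; have [-> -> ->] := lcrossE x y; ring. Qed.

Lemma mdot_lcrossr x y : mdot (lcross x y) y = 0.
Proof. by rewrite /mdot; have [-> -> ->] := lcrossE x y; ring. Qed.

Lemma mdot_lcross x y :
  mdot (lcross x y) (lcross x y) = mdot x x * mdot y y - mdot x y ^+ 2.
Proof. by rewrite /mdot; have [-> -> ->] := lcrossE x y; ring. Qed.

End Minkowski.

Section Lorentz.
Variable R : realType.
Implicit Types (x y a b d e : 'cV[R]_3) (g : 'M[R]_3) (z : 'cV[R[i]]_3) (v : R).

Definition colmx3 a b d : 'M[R]_3 :=
  \matrix_(i < 3, j < 3)
    (if (j : nat) == 0%N then a i 0 else if (j : nat) == 1%N then b i 0 else d i 0).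

Lemma det3_colmx3 a b d : det3 a b d = \det (colmx3 a b d).
Proof. by []. Qed.

Lemma colmx3E a b d :
  [/\ col ord0 (colmx3 a b d) = a, col i1 (colmx3 a b d) = b & col i2 (colmx3 a b d) = d].
Proof. by split; apply/matrixP => i j; rewrite (ord1 j) !mxE ?inordK. Qed.

Lemma mul_colmx3 a b d p :
  colmx3 a b d *m p = p ord0 0 *: a + p i1 0 *: b + p i2 0 *: d.
Proof.
apply/matrixP => i j; rewrite (ord1 j) !mxE sum_ord3 !mxE !inordK //=; ring.
Qed.

Lemma det3E e x y : det3 e x y =
  e ord0 0 * (x i1 0 * y i2 0 - y i1 0 * x i2 0)
  - x ord0 0 * (e i1 0 * y i2 0 - y i1 0 * e i2 0)
  + y ord0 0 * (e i1 0 * x i2 0 - x i1 0 * e i2 0).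
Proof. by rewrite /det3 det_mx33 !mxE !inordK. Qed.

Lemma det3_lcross e x y : det3 e x y = mdot e (lcross x y).
Proof. by rewrite det3E /mdot; have [-> -> ->] := lcrossE x y; ring. Qed.

Lemma det3Z (k l m : R) a b d :
  det3 (k *: a) (l *: b) (m *: d) = k * l * m * det3 a b d.
Proof. by rewrite !det3E !mxE; ring. Qed.

Lemma det3_mul g a b d : det3 (g *m a) (g *m b) (g *m d) = \det g * det3 a b d.
Proof.
rewrite !det3_colmx3 -det_mulmx; congr (\det _); apply/matrixP => i j.
by case: (ord3P j) => ->; rewrite !mxE !sum_ord3 !mxE ?inordK.
Qed.

Lemma mdotE a b : mdot a b = (a^T *m Jmx R *m b) 0 0.
Proof.
rewrite mxE sum_ord3 !mxE !sum_ord3 !mxE -!val_eqE /= !inordK //= /mdot; ring.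
Qed.

Lemma gram_col g i j : (g^T *m Jmx R *m g) i j = mdot (col i g) (col j g).
Proof.
rewrite mdotE !mxE !sum_ord3 !mxE !sum_ord3 !mxE -!val_eqE /= !inordK //=; ring.
Qed.

Lemma mdot_mulmx g a b :
  g^T *m Jmx R *m g = Jmx R -> mdot (g *m a) (g *m b) = mdot a b.
Proof.
move=> Jg; rewrite !mdotE.
have -> : (g *m a)^T *m Jmx R *m (g *m b) = a^T *m (g^T *m Jmx R *m g) *m b.
  by rewrite trmx_mul !mulmxA.
by rewrite Jg.
Qed.

Lemma mdot_col_mulmx g i a : mdot (col i g) a = (g^T *m Jmx R *m a) i 0.
Proof. by rewrite mdotE tr_col -!row_mul mxE. Qed.

Lemma det_Jmx : \det (Jmx R) = 1.
Proof. by rewrite det_mx33 !mxE -!val_eqE /= !inordK //=; ring. Qed.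

Lemma Jmx_mul_spacelike a : a ord0 0 = 0 -> Jmx R *m a = - a.
Proof.
move=> a0; apply/matrixP => i j; rewrite (ord1 j) !mxE sum_ord3 !mxE -!val_eqE /= !inordK //.
by case: (ord3P i) => ->; rewrite ?inordK //= ?a0; ring.
Qed.

Lemma colmx3_lorentz a b d :
  mdot a a = 1 -> mdot b b = -1 -> mdot d d = -1 ->
  mdot a b = 0 -> mdot a d = 0 -> mdot b d = 0 ->
  (colmx3 a b d)^T *m Jmx R *m colmx3 a b d = Jmx R.
Proof.
move=> aa bb dd ab ad bd; have [c0 c1 c2] := colmx3E a b d.
apply/matrixP => i j; rewrite gram_col mxE -val_eqE.
by case: (ord3P i) => ->; case: (ord3P j) => ->; rewrite ?c0 ?c1 ?c2 /= ?inordK //= 1?mdotC.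
Qed.

Lemma Vplus_mdot_gt0 a b : Vplus a -> Vplus b -> 0 < mdot a b.
Proof.
rewrite /Vplus /mdot; set a0 := a ord0 0; set a1 := a i1 0; set a2 := a i2 0.
set b0 := b ord0 0; set b1 := b i1 0; set b2 := b i2 0 => -[aa a0_gt0] [bb b0_gt0].
have cauchy_schwarz : (a1 * b1 + a2 * b2) ^+ 2 <= (a1 ^+ 2 + a2 ^+ 2) * (b1 ^+ 2 + b2 ^+ 2).
  rewrite -subr_ge0 (_ : _ - _ = (a1 * b2 - a2 * b1) ^+ 2); last by ring.
  exact: sqr_ge0.
have : (a1 ^+ 2 + a2 ^+ 2) * (b1 ^+ 2 + b2 ^+ 2) < (a0 * b0) ^+ 2.
  rewrite exprMn; apply: ltr_pM; rewrite ?addr_ge0 ?sqr_ge0 //; nra.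
move/(le_lt_trans cauchy_schwarz); have : 0 < a0 * b0 by rewrite mulr_gt0.
rewrite -addrA -opprD; move: (a0 * b0) (a1 * b1 + a2 * b2) => s t; nra.
Qed.

Lemma mdot_Vplus_lt0 e b : Vplus e -> 0 < mdot b b -> mdot e b < 0 -> b ord0 0 < 0.
Proof.
move=> eV bb eb; have [//|b0_gt0|b0] := ltgtP (b ord0 0) 0.
- by have := Vplus_mdot_gt0 eV (conj bb b0_gt0); lra.
- by move: bb; rewrite /mdot b0; nra.
Qed.

Lemma Vplus_col0 g : SO012 g -> Vplus (col ord0 g).
Proof.
move=> [Jg [_ g00]]; split; last by rewrite mxE.
by rewrite -gram_col Jg mxE.
Qed.

Lemma reV_actG g z : reV (actG g z) = g *m reV z.
Proof. by apply/matrixP => i j; rewrite !mxE /=; ring. Qed.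

Lemma imV_actG g z : imV (actG g z) = g *m imV z.
Proof. by apply/matrixP => i j; rewrite !mxE /=; ring. Qed.

Lemma reV_imV_inj z1 z2 : reV z1 = reV z2 -> imV z1 = imV z2 -> z1 = z2.
Proof.
move=> /matrixP re12 /matrixP im12; apply/matrixP => i j.
by move: (re12 i j) (im12 i j); rewrite !mxE; case: (z1 i j) (z2 i j) => ? ? [? ?] /= -> ->.
Qed.

Lemma Xc_ReIm z : Xc z <->
  mdot (reV z) (reV z) - mdot (imV z) (imV z) = -1 /\ mdot (reV z) (imV z) = 0.
Proof.
rewrite /Xc /mdot !mxE.
case: (z ord0 0) (z i1 0) (z i2 0) => [a0 b0] [a1 b1] [a2 b2] /=.
split => [zz | [re im]].
  have /= zz_re := congr1 (@complex.Re R) zz; have /= zz_im := congr1 (@complex.Im R) zz.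
  by split; [rewrite -zz_re; ring | lra].
apply/eqP; rewrite eq_complex /=; apply/andP; split; apply/eqP.
  by rewrite -re; ring.
by rewrite oppr0 -(mulr0 2) -im; ring.
Qed.

Lemma Xc_actG g z : g^T *m Jmx R *m g = Jmx R -> Xc z -> Xc (actG g z).
Proof. by move=> Jg; rewrite !Xc_ReIm reV_actG imV_actG !mdot_mulmx. Qed.

Lemma coshR2_sub_sinhR2 v : coshR v ^+ 2 - sinhR v ^+ 2 = 1.
Proof. by rewrite /coshR /sinhR -[RHS](expRxMexpNx_1 v); field. Qed.

Lemma coshR_gt0 v : 0 < coshR v.
Proof. by rewrite /coshR divr_gt0 // addr_gt0 // expR_gt0. Qed.

Lemma sinhR_eq0 v : (sinhR v == 0) = (v == 0).
Proof.
rewrite /sinhR mulf_eq0 invr_eq0 pnatr_eq0 orbF subr_eq0 (inj_eq (@expR_inj R)).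
by apply/eqP/eqP => ?; lra.
Qed.

Lemma sinhR_lt0 v : (sinhR v < 0) = (v < 0).
Proof. by rewrite /sinhR pmulr_llt0 ?invr_gt0 // subr_lt0 ltr_expR; apply/idP/idP; lra. Qed.

Lemma sgr_sinhR v : Num.sg (sinhR v) = Num.sg v.
Proof. by rewrite !sgr_def sinhR_eq0 sinhR_lt0. Qed.

Lemma sinhR_surj s : exists v, sinhR v = s.
Proof.
set r := Num.sqrt (1 + s ^+ 2).
have r2 : r ^+ 2 = 1 + s ^+ 2 by rewrite sqr_sqrtr // addr_ge0 // sqr_ge0.
have r_ge0 : 0 <= r := sqrtr_ge0 _.
have sr_gt0 : 0 < s + r by nra.
have sr_inv : (s + r)^-1 = r - s.
  apply: mulr1_eq.
  by transitivity (r ^+ 2 - s ^+ 2); [ring | rewrite r2; ring].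
by exists (ln (s + r)); rewrite /sinhR expRN lnK ?posrE // sr_inv; field.
Qed.

Lemma reV_hpt v :
  [/\ reV (hpt v) ord0 0 = 0, reV (hpt v) i1 0 = 0 & reV (hpt v) i2 0 = coshR v].
Proof. by rewrite !mxE !inordK //=; split; ring. Qed.

Lemma imV_hpt v :
  [/\ imV (hpt v) ord0 0 = 0, imV (hpt v) i1 0 = sinhR v & imV (hpt v) i2 0 = 0].
Proof. by rewrite !mxE !inordK //=; split; ring. Qed.

Lemma mdot_imV_hpt v : mdot (imV (hpt v)) (imV (hpt v)) = - sinhR v ^+ 2.
Proof. by rewrite /mdot; have [-> -> ->] := imV_hpt v; ring. Qed.

Lemma Xc_hpt v : Xc (hpt v).
Proof.
apply/Xc_ReIm; rewrite mdot_imV_hpt /mdot.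
have [-> -> ->] := reV_hpt v; have [-> -> ->] := imV_hpt v.
by split; [have := coshR2_sub_sinhR2 v; lra | ring].
Qed.

Lemma det3_actG_hpt e g v : SO012 g ->
  det3 e (reV (actG g (hpt v))) (imV (actG g (hpt v)))
  = - (mdot (col ord0 g) e * coshR v * sinhR v).
Proof.
move=> [Jg [det_g _]].
have det_gTJ : \det (g^T *m Jmx R) = 1 by rewrite det_mulmx det_tr det_g det_Jmx mulr1.
rewrite reV_actG imV_actG -[LHS]mul1r -det_gTJ -det3_mul !mulmxA Jg.
have [x0 _ _] := reV_hpt v; have [y0 _ _] := imV_hpt v.
rewrite !Jmx_mul_spacelike // det3E -mdot_col_mulmx !mxE !inordK //=; ring.
Qed.

Lemma actG_hpt_in_T e g v : Vplus e -> SO012 g ->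
  [/\ Xc (actG g (hpt v)),
      mdot (imV (actG g (hpt v))) (imV (actG g (hpt v))) = - sinhR v ^+ 2 &
      Num.sg (det3 e (reV (actG g (hpt v))) (imV (actG g (hpt v)))) = - Num.sg v].
Proof.
move=> eV gS; have [Jg _] := gS; split.
- exact: Xc_actG (Xc_hpt v).
- by rewrite imV_actG mdot_mulmx // mdot_imV_hpt.
- have col0_e_cosh_gt0 : 0 < mdot (col ord0 g) e * coshR v.
    exact: mulr_gt0 (Vplus_mdot_gt0 (Vplus_col0 gS) eV) (coshR_gt0 v).
  by rewrite det3_actG_hpt // sgrN sgrM gtr0_sg // mul1r sgr_sinhR.
Qed.

Definition orbit_frame x y (C S : R) : 'M[R]_3 :=
  colmx3 (- (C * S)^-1 *: lcross x y) (S^-1 *: y) (C^-1 *: x).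

Section OrbitFrame.
Variables (x y : 'cV[R]_3) (C S : R).
Hypotheses (xx : mdot x x = - C ^+ 2) (yy : mdot y y = - S ^+ 2) (xy : mdot x y = 0).
Hypotheses (C_gt0 : 0 < C) (S_neq0 : S != 0).

Lemma mdot_lcross_frame : mdot (lcross x y) (lcross x y) = C ^+ 2 * S ^+ 2.
Proof. by rewrite mdot_lcross xx yy xy; ring. Qed.

Lemma orbit_frame_lorentz : (orbit_frame x y C S)^T *m Jmx R *m orbit_frame x y C S = Jmx R.
Proof.
have C_neq0 : C != 0 by rewrite gt_eqF.
apply: colmx3_lorentz; rewrite !mdotZl !mdotZr ?mdot_lcross_frame ?xx ?yy ?xy.
- by field; rewrite C_neq0 S_neq0.
- by field.
- by field.
- by rewrite mdot_lcrossr !mulr0.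
- by rewrite mdot_lcrossl !mulr0.
- by rewrite mdotC xy !mulr0.
Qed.

Lemma det_orbit_frame : \det (orbit_frame x y C S) = 1.
Proof.
have C_neq0 : C != 0 by rewrite gt_eqF.
rewrite -det3_colmx3 det3Z det3_lcross.
have -> : lcross y x = - lcross x y.
  by apply/matrixP => i j; rewrite (ord1 j) !mxE; case: (ord3P i) => ->; rewrite ?inordK //=; ring.
by rewrite -scaleN1r mdotZr mdot_lcross_frame; field; rewrite C_neq0 S_neq0.
Qed.

Lemma orbit_frame00_gt0 e : Vplus e -> S * det3 e x y < 0 -> 0 < orbit_frame x y C S ord0 ord0.
Proof.
move=> eV Sdet_lt0; have S2_gt0 : 0 < S ^+ 2 by rewrite exprn_even_gt0 //= S_neq0.
have : (S *: lcross x y) ord0 0 < 0.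
  apply: mdot_Vplus_lt0 eV _ _; last by rewrite mdotZr -det3_lcross.
  rewrite mdotZl mdotZr mdot_lcross_frame.
  have -> : S * (S * (C ^+ 2 * S ^+ 2)) = S ^+ 2 * C ^+ 2 * S ^+ 2 by ring.
  exact: mulr_gt0 (mulr_gt0 S2_gt0 (exprn_gt0 2 C_gt0)) S2_gt0.
rewrite /orbit_frame; move: (lcross x y) => w; rewrite !mxE /= => Sw0_lt0.
have -> : - (C * S)^-1 * w ord0 0 = - (S * w ord0 0) / (C * S ^+ 2).
  by field; rewrite S_neq0 gt_eqF.
by rewrite divr_gt0 ?oppr_gt0 // mulr_gt0.
Qed.

End OrbitFrame.

Lemma orbit_frame_hpt x y v : sinhR v != 0 ->
  orbit_frame x y (coshR v) (sinhR v) *m reV (hpt v) = x /\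
  orbit_frame x y (coshR v) (sinhR v) *m imV (hpt v) = y.
Proof.
move=> S_neq0; have C_neq0 : coshR v != 0 by rewrite gt_eqF ?coshR_gt0.
have [x0 x1 x2] := reV_hpt v; have [y0 y1 y2] := imV_hpt v.
rewrite !mul_colmx3 x0 x1 x2 y0 y1 y2 !scale0r !add0r addr0 !scalerA.
by rewrite !mulfV // !scale1r.
Qed.

Lemma T_in_orbit_hpt e z : Vplus e -> Xc z -> mdot (imV z) (imV z) < 0 ->
  det3 e (reV z) (imV z) != 0 ->
  exists2 g, SO012 g &
    exists2 v, Num.sg v = - Num.sg (det3 e (reV z) (imV z)) & z = actG g (hpt v).
Proof.
move=> eV /Xc_ReIm [xx_yy xy] yy_lt0 D_neq0.
set x := reV z in xx_yy xy D_neq0 *; set y := imV z in xx_yy xy yy_lt0 D_neq0 *.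
have [v sinh_v] := sinhR_surj (- Num.sg (det3 e x y) * Num.sqrt (- mdot y y)).
have sqrt_gt0 : 0 < Num.sqrt (- mdot y y) by rewrite sqrtr_gt0 oppr_gt0.
have sg_v : Num.sg v = - Num.sg (det3 e x y).
  by rewrite -sgr_sinhR sinh_v sgrM sgrN sgr_id (gtr0_sg sqrt_gt0) mulr1.
have S_neq0 : sinhR v != 0 by rewrite -sgr_eq0 sgr_sinhR sg_v oppr_eq0 sgr_eq0.
have yy : mdot y y = - sinhR v ^+ 2.
  by rewrite sinh_v exprMn sqrrN sqr_sg D_neq0 mul1r sqr_sqrtr ?opprK // oppr_ge0 ltW.
have xx : mdot x x = - coshR v ^+ 2 by have := coshR2_sub_sinhR2 v; lra.
have C_gt0 := coshR_gt0 v.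
exists (orbit_frame x y (coshR v) (sinhR v)).
  split; first exact: orbit_frame_lorentz xx yy xy C_gt0 S_neq0.
  split; first exact: det_orbit_frame xx yy xy C_gt0 S_neq0.
  apply: (orbit_frame00_gt0 xx yy xy C_gt0 S_neq0 eV).
  by rewrite -sgr_lt0 sgrM sgr_sinhR sg_v mulNr -expr2 sqr_sg D_neq0 oppr_lt0.
exists v => //; have [to_x to_y] := orbit_frame_hpt x y S_neq0.
by apply: reV_imV_inj; rewrite ?reV_actG ?imV_actG ?to_x ?to_y.
Qed.

End Lorentz.

Theorem proposition5 (R : realType) (e : 'cV[R]_3) :
  Vplus e ->
  (forall z : 'cV[R[i]]_3,
      Tright e z <-> exists g : 'M[R]_3, SO012 g /\ exists v : R, 0 < v /\ z = actG g (hpt v)) /\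
  (forall z : 'cV[R[i]]_3,
      Tleft e z <-> exists g : 'M[R]_3, SO012 g /\ exists v : R, v < 0 /\ z = actG g (hpt v)).
Proof.
move=> eV; split=> z; split.
- move=> [Xz [yy_lt0 sg_D]].
  have [|g gS [v sg_v ->]] := T_in_orbit_hpt eV Xz yy_lt0.
    by rewrite -sgr_eq0 sg_D ?oppr_eq0 oner_eq0.
  by exists g; split=> //; exists v; rewrite -sgr_gt0 sg_v sg_D opprK ltr01.
- move=> [g [gS [v [v_gt0 ->]]]]; have [Xz yy sg_D] := actG_hpt_in_T v eV gS.
  split=> //; split; last by rewrite sg_D gtr0_sg.
  by rewrite yy oppr_lt0 exprn_even_gt0 //= sinhR_eq0 gt_eqF.
- move=> [Xz [yy_lt0 sg_D]].
  have [|g gS [v sg_v ->]] := T_in_orbit_hpt eV Xz yy_lt0.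
    by rewrite -sgr_eq0 sg_D ?oppr_eq0 oner_eq0.
  by exists g; split=> //; exists v; rewrite -sgr_lt0 sg_v sg_D oppr_lt0 ltr01.
- move=> [g [gS [v [v_lt0 ->]]]]; have [Xz yy sg_D] := actG_hpt_in_T v eV gS.
  split=> //; split; last by rewrite sg_D ltr0_sg ?opprK.
  by rewrite yy oppr_lt0 exprn_even_gt0 //= sinhR_eq0 lt_eqF.
Qed.
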